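(* A U-matroid $U=(E,\mathcal{D},\rho)$ is a poset matroid if and only if every basis of $U$ is an element of $\mathcal{D}$.
   Context: An accessible distributive lattice on finite $E$ is a family $\mathcal{D}\subseteq2^E$ containing $\emptyset,E$, closed under $\cup,\cap$, such that each nonempty $A\in\mathcal{D}$ has some $x$ with $A\setminus\{x\}\in\mathcal{D}$. A U-matroid is a triple $(E,\mathcal{D},\rho)$ with $\rho:\mathcal{D}\to\mathbb{N}$ satisfying $\rho(\emptyset)=0$; $\rho(A)\le\rho(B)$ for $A\subseteq B$; $\rho(A)+\rho(B)\ge\rho(A\cup B)+\rho(A\cap B)$; and $\rho(A\cup\{e\})-\rho(A)\le1$ whenever $A,A\cup\{e\}\in\mathcal{D}$. Its bases are the supports of the vertices of the base polyhedron $\{\mathbf{x}\in\mathbb{R}^E:\sum_{a\in A}x_a\le\rho(A)\ \forall A\in\mathcal{D},\ \sum_{e\in E}x_e=\rho(E)\}$. A poset matroid is a triple $(E,\mathcal{D},\rho)$ with $\mathcal{D}$ an accessible distributive lattice and $\rho:\mathcal{D}\to\mathbb{N}$ satisfying $\rho(\emptyset)=0$, monotonicity, unit increase, and the local chain property: whenever $A\in\mathcal{D}$, $b_1,b_2\in E$, $A_{12}=A\cup\{b_1,b_2\}\in\mathcal{D}$ and $\rho(A_{12})>\rho(A)$, there is $j\in\{1,2\}$ with $A\cup\{b_j\}\in\mathcal{D}$ and $\rho(A\cup\{b_j\})=\rho(A)+1$. *)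

From HB Require Import structures.
From mathcomp Require Import all_boot all_order all_algebra.
From mathcomp Require Import reals.
Set Implicit Arguments. Unset Strict Implicit. Unset Printing Implicit Defensive.
Import Order.TTheory GRing.Theory Num.Theory.

(* Ground set: a finite type E; D : family of subsets of E; rho : {set E} -> nat
   (only its values on members of D matter). *)

Definition accessible_distr_lattice (E : finType) (D : {set {set E}}) : Prop :=
  [/\ set0 \in D, setT \in D,
      (forall A B, A \in D -> B \in D -> A :|: B \in D),
      (forall A B, A \in D -> B \in D -> A :&: B \in D) &
      (forall A, A \in D -> A != set0 -> exists2 x, x \in A & A :\ x \in D)].

Definition is_Umatroid (E : finType) (D : {set {set E}}) (rho : {set E} -> nat) : Prop :=
  [/\ accessible_distr_lattice D,
      rho set0 = 0%N,
      (forall A B, A \in D -> B \in D -> A \subset B -> (rho A <= rho B)%N),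
      (forall A B, A \in D -> B \in D ->
         (rho (A :|: B) + rho (A :&: B) <= rho A + rho B)%N) &
      (forall A e, A \in D -> e |: A \in D -> (rho (e |: A) - rho A <= 1)%N)].

Local Open Scope ring_scope.

Definition base_polyhedron (R : realType) (E : finType) (D : {set {set E}})
    (rho : {set E} -> nat) (x : E -> R) : Prop :=
  (forall A, A \in D -> \sum_(a in A) x a <= (rho A)%:R) /\
  \sum_(e : E) x e = (rho setT)%:R.

Definition is_vertex (R : realType) (E : finType) (P : (E -> R) -> Prop)
    (x : E -> R) : Prop :=
  P x /\
  forall (y z : E -> R) (t : R), P y -> P z -> 0 < t -> t < 1 ->
    (forall e, x e = t * y e + (1 - t) * z e) -> y = z.

Definition support (R : realType) (E : finType) (x : E -> R) : {set E} :=
  [set e | x e != 0].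

Definition is_basis (R : realType) (E : finType) (D : {set {set E}})
    (rho : {set E} -> nat) (B : {set E}) : Prop :=
  exists x : E -> R, @is_vertex R E (@base_polyhedron R E D rho) x /\ B = support x.

Local Close Scope ring_scope.

Definition is_poset_matroid (E : finType) (D : {set {set E}}) (rho : {set E} -> nat) : Prop :=
  [/\ accessible_distr_lattice D,
      rho set0 = 0%N,
      (forall A B, A \in D -> B \in D -> A \subset B -> (rho A <= rho B)%N),
      (forall A e, A \in D -> e |: A \in D -> (rho (e |: A) - rho A <= 1)%N) &
      (forall A (b1 b2 : E), A \in D -> b1 |: (b2 |: A) \in D ->
         (rho A < rho (b1 |: (b2 |: A)))%N ->
         (b1 |: A \in D /\ rho (b1 |: A) = (rho A).+1) \/
         (b2 |: A \in D /\ rho (b2 |: A) = (rho A).+1))].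

From Pilot Require Import Defs.
From HB Require Import structures.
From mathcomp Require Import all_boot all_order all_algebra.
From mathcomp Require Import reals boolp.
From mathcomp Require Import zify lra.
Set Implicit Arguments. Unset Strict Implicit. Unset Printing Implicit Defensive.
Import Order.TTheory GRing.Theory Num.Theory.

(* (=>) The tight sets of a vertex x of the base polyhedron form a sublattice
   of D that separates points (else x could be moved along 1_e - 1_f), so every
   nonempty tight set C stays tight after removing a suitable e.  Along such a
   descent x e = rho C - rho (C :\ e) is 0 or 1, and the local chain property
   pushes a rank jump down to every subset of equal rank; hence
   supp x :&: C \in D for each tight C, in particular for C = E.
   (<=) If A \in D and A12 = A + b1 + b2 \in D has larger rank, some A + bj
   lies in D.  When it does not raise the rank, the greedy vertex along a
   maximal chain of D through A, A + bj, A12 is 0 at bj and 1 at the other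
   element bo; its support is a basis, hence in D, so
   A + bo = A :|: (supp :&: A12) \in D, and submodularity forces its rank up. *)

Lemma mem_split (T : eqType) (x : T) (s : seq T) :
  x \in s -> exists u v, s = u ++ x :: v.
Proof. by case/splitPr=> u v; exists u, v. Qed.

Lemma set_rcons (T : finType) (u : seq T) (e : T) :
  [set:: rcons u e] = e |: [set:: u].
Proof. by apply/setP=> y; rewrite !inE mem_rcons inE. Qed.

Section AccessibleLattice.
Variables (E : finType) (D : {set {set E}}).
Hypothesis D_lattice : accessible_distr_lattice D.

Lemma lattice_set0 : set0 \in D. Proof. by case: D_lattice. Qed.
Lemma lattice_setT : setT \in D. Proof. by case: D_lattice. Qed.

Lemma lattice_setU A B : A \in D -> B \in D -> A :|: B \in D.
Proof. by case: D_lattice => _ _ + _ _; apply. Qed.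

Lemma lattice_setI A B : A \in D -> B \in D -> A :&: B \in D.
Proof. by case: D_lattice => _ _ _ + _; apply. Qed.

(* If the accessibility step G :\ f0 removes an element of S, recurse on
   S :\ f0 \proper G :\ f0 and add S back. *)
Lemma lattice_removable S G : S \in D -> G \in D -> S \proper G ->
  exists2 f, f \in G :\: S & G :\ f \in D.
Proof.
have [n] := ubnP #|G|; elim: n S G => // n IH S G ltGn SD GD ltSG.
have sSG := proper_sub ltSG.
have [f0 f0G Gf0D] : exists2 f0, f0 \in G & G :\ f0 \in D.
  case: D_lattice => _ _ _ _; apply=> //.
  by rewrite -card_gt0 (leq_ltn_trans _ (proper_card ltSG)).
have [f0S | f0S] := boolP (f0 \in S); last by exists f0; rewrite // inE f0S.
have Sf0D : S :\ f0 \in D.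
  by rewrite -(setIidPl sSG) -setIDA lattice_setI.
have ltSGf0 : S :\ f0 \proper G :\ f0.
  rewrite properEcard setSD //=.
  by have := proper_card ltSG; rewrite (cardsD1 f0 S) (cardsD1 f0 G) f0S f0G.
have [|f] := IH _ _ _ Sf0D Gf0D ltSGf0.
  by move: ltGn; rewrite (cardsD1 f0 G) f0G.
rewrite !inE => /andP[+ /andP[ff0 fG]] Gf0fD; rewrite ff0 /= => fS.
exists f; first by rewrite inE fS.
suff -> : G :\ f = G :\ f0 :\ f :|: S by apply: lattice_setU.
apply/setP=> y; rewrite !inE; case: (eqVneq y f) => [->|_]; first by rewrite (negbTE fS).
case: (eqVneq y f0) => [->|_] /=; first by rewrite f0S f0G ?orbT.
by case: (boolP (y \in S)) => [/(subsetP sSG)|]; rewrite ?orbT ?orbF.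
Qed.

Definition lattice_chain (t : seq E) (G : {set E}) :=
  [/\ uniq t, [set:: t] = G & forall u v, t = u ++ v -> [set:: u] \in D].

Lemma chain_nil : lattice_chain [::] set0.
Proof.
by split=> // -[|//] v _; rewrite set_nil lattice_set0.
Qed.

Lemma chain_rcons t G f : lattice_chain t G -> f \notin G -> f |: G \in D ->
  lattice_chain (rcons t f) (f |: G).
Proof.
move=> [t_uniq tG t_pre] fG fGD; split.
- by rewrite rcons_uniq t_uniq andbT; apply: contra fG => ft; rewrite -tG inE.
- by rewrite set_rcons tG.
- move=> u; case/lastP=> [|v w]; first by rewrite cats0 => <-; rewrite set_rcons tG.
  by rewrite -rcons_cat => /rcons_inj[/t_pre].
Qed.

Lemma chain_extend t G H : lattice_chain t G -> H \in D -> G \subset H ->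
  exists t', lattice_chain (t ++ t') H.
Proof.
have [n] := ubnP #|H|; elim: n H => // n IH H ltHn tG HD sGH.
have GD : G \in D by case: tG => _ <- t_pre; apply: (t_pre _ [::]); rewrite cats0.
have [<- | neGH] := eqVneq G H; first by exists [::]; rewrite cats0.
have ltGH : G \proper H by rewrite properEneq neGH.
have [f /setDP[fH fG] HfD] := lattice_removable GD HD ltGH.
have ltHfn : #|H :\ f| < n by move: ltHn; rewrite (cardsD1 f H) fH.
have sGHf : G \subset H :\ f.
  by apply/subsetP=> y yG; rewrite !inE (subsetP sGH) // andbT; apply: contraNneq fG => <-.
have [t' tHf] := IH _ ltHfn tG HfD sGHf.
exists (rcons t' f); rewrite -rcons_cat -(setD1K fH).
by apply: chain_rcons; rewrite ?setD1K // !inE eqxx.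
Qed.

Section RankFunction.
Variable rho : {set E} -> nat.
Hypothesis rho_mono : forall A B, A \in D -> B \in D -> A \subset B -> rho A <= rho B.
Hypothesis rho_unit : forall A e, A \in D -> e |: A \in D -> rho (e |: A) - rho A <= 1.

Definition raises_rank A b := b |: A \in D /\ rho (b |: A) = (rho A).+1.

Definition local_chain_property := forall A b1 b2, A \in D -> b1 |: (b2 |: A) \in D ->
  rho A < rho (b1 |: (b2 |: A)) -> raises_rank A b1 \/ raises_rank A b2.

Lemma rank_setU1 A b : A \in D -> b |: A \in D ->
  rho (b |: A) = rho A \/ raises_rank A b.
Proof.
move=> AD bAD; have := rho_mono AD bAD (subsetUr _ _); have := rho_unit AD bAD.
by rewrite /raises_rank bAD; lia.
Qed.

Lemma raises_rankP A b : A \in D -> b |: A \in D -> rho A < rho (b |: A) -> raises_rank A b.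
Proof. by move=> AD bAD; case: (rank_setU1 AD bAD) => // ->; rewrite ltnn. Qed.

Hypothesis rho_local : local_chain_property.

Lemma raises_rank_sub S G e : S \in D -> G \in D -> S \subset G -> rho S = rho G ->
  raises_rank G e -> raises_rank S e.
Proof.
have [n] := ubnP #|G|; elim: n G => // n IH G ltGn SD GD sSG rSG eG.
have [-> // | neSG] := eqVneq S G.
have ltSG : S \proper G by rewrite properEneq neSG.
have [f /setDP[fG fS] GfD] := lattice_removable SD GD ltSG.
have sSGf : S \subset G :\ f.
  by apply/subsetP=> y yS; rewrite !inE (subsetP sSG) // andbT; apply: contraNneq fS => <-.
have rGf : rho (G :\ f) = rho G.
  by apply/eqP; rewrite eqn_leq rho_mono ?subD1set //= -rSG rho_mono.
have ltGfn : #|G :\ f| < n by move: ltGn; rewrite (cardsD1 f G) fG.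
apply: (IH (G :\ f)) => //; first by rewrite rGf.
have [eGD reG] := eG.
have eGfD : e |: (f |: (G :\ f)) \in D by rewrite setD1K.
have ltGf : rho (G :\ f) < rho (e |: (f |: (G :\ f))) by rewrite setD1K // reG rGf.
have [//|[_]] := rho_local GfD eGfD ltGf.
by rewrite setD1K // rGf => /n_Sn.
Qed.
End RankFunction.
End AccessibleLattice.

Local Open Scope ring_scope.

Lemma sum_setUI (V : nmodType) (I : finType) (F : I -> V) (A B : {set I}) :
  \sum_(i in A :|: B) F i + \sum_(i in A :&: B) F i = \sum_(i in A) F i + \sum_(i in B) F i.
Proof.
rewrite !(big_mkcond (fun i => i \in _)) -!big_split /=; apply: eq_bigr => i _.
by rewrite !inE; case: (i \in A); case: (i \in B); rewrite ?addr0 ?add0r.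
Qed.

Lemma uniform_step (R : realFieldType) (I : finType) (P : {pred I}) (a b : I -> R) :
  (forall i, P i -> 0 <= a i) -> (forall i, P i -> a i = 0 -> b i = 0) ->
  exists2 e : R, 0 < e & forall i, P i -> e * `|b i| <= a i.
Proof.
move=> a_ge0 ab0; set S := \sum_(i | P i) `|b i| / a i.
have S_ge0 : 0 <= S by apply: sumr_ge0 => i Pi; rewrite divr_ge0 ?a_ge0.
have S1_gt0 : 0 < 1 + S by rewrite ltr_wpDr.
exists (1 + S)^-1; first by rewrite invr_gt0.
move=> i Pi; rewrite mulrC ler_pdivrMr //.
have := a_ge0 i Pi; rewrite le_eqVlt => /orP[/eqP ai0 | ai_gt0].
  by rewrite ab0 -?ai0 ?normr0 ?mul0r.
have : `|b i| / a i <= S.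
  rewrite /S (bigD1 i) //= lerDl sumr_ge0 // => j /andP[Pj _].
  by rewrite divr_ge0 ?a_ge0.
by rewrite ler_pdivrMr // => bS; nra.
Qed.

Lemma sum_setT (V : nmodType) (I : finType) (F : I -> V) :
  \sum_(i in [set: I]) F i = \sum_i F i.
Proof. by apply: eq_bigl => i; rewrite inE. Qed.

Lemma sum_indicator (R : pzSemiRingType) (I : finType) (L : {set I}) (j : I) :
  \sum_(i in L) ((i == j)%:R : R) = (j \in L)%:R.
Proof.
have [jL | jNL] := boolP (j \in L).
  rewrite (big_setD1 j jL) /= eqxx big1 ?addr0 // => i; rewrite !inE => /andP[ij _].
  by rewrite (negbTE ij).
by rewrite big1 // => i iL; case: eqP => // ij; rewrite -ij iL in jNL.
Qed.

Section BasePolyhedron.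
Variables (R : realType) (E : finType) (D : {set {set E}}) (rho : {set E} -> nat).
Hypothesis rho_U : is_Umatroid D rho.

Let D_lattice : accessible_distr_lattice D. Proof. by case: rho_U. Qed.
Let rho0 : rho set0 = 0%N. Proof. by case: rho_U. Qed.
Let rho_mono A B : A \in D -> B \in D -> A \subset B -> (rho A <= rho B)%N.
Proof. by case: rho_U => _ _ + _ _; apply. Qed.
Let rho_unit A e : A \in D -> e |: A \in D -> (rho (e |: A) - rho A <= 1)%N.
Proof. by case: rho_U => _ _ _ _; apply. Qed.
Let rho_submod A B : A \in D -> B \in D ->
  (rho (A :|: B))%:R + (rho (A :&: B))%:R <= (rho A)%:R + (rho B)%:R :> R.
Proof. by move=> AD BD; case: rho_U => _ _ _ /(_ A B AD BD) + _; rewrite -!natrD ler_nat. Qed.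

Notation P := (@base_polyhedron R E D rho).

Definition tight (x : E -> R) A := (A \in D) && (\sum_(a in A) x a == (rho A)%:R).

Lemma tight_set0 x : tight x set0.
Proof. by rewrite /tight (lattice_set0 D_lattice) big_set0 rho0 eqxx. Qed.

Lemma tight_setT x : P x -> tight x setT.
Proof. by case=> _ xE; rewrite /tight (lattice_setT D_lattice) sum_setT xE eqxx. Qed.

Lemma tight_setU_setI x A B : P x -> tight x A -> tight x B ->
  tight x (A :|: B) /\ tight x (A :&: B).
Proof.
case=> Px _ /andP[AD /eqP xA] /andP[BD /eqP xB].
have UD := lattice_setU D_lattice AD BD; have ID := lattice_setI D_lattice AD BD.
have := Px _ UD; have := Px _ ID; have := rho_submod AD BD; have := sum_setUI x A B.
by rewrite /tight UD ID xA xB => *; split; apply/eqP; lra.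
Qed.

Lemma tight_convex x y z t A : P y -> P z -> 0 < t < 1 ->
  (forall e, x e = t * y e + (1 - t) * z e) -> tight x A -> tight y A /\ tight z A.
Proof.
move=> [Py _] [Pz _] /andP[t_gt0 t_lt1] xyz /andP[AD /eqP xA].
have sx : \sum_(a in A) x a = t * \sum_(a in A) y a + (1 - t) * \sum_(a in A) z a.
  by rewrite !mulr_sumr -big_split; apply: eq_bigr => a _; rewrite xyz.
have := Py _ AD; have := Pz _ AD; rewrite /tight AD -xA sx => *; split; apply/eqP; nra.
Qed.

Lemma perturb_base x d e : 0 <= e -> P x -> \sum_a d a = 0 ->
  (forall A, A \in D -> e * `|\sum_(a in A) d a| <= (rho A)%:R - \sum_(a in A) x a) ->
  P (fun a => x a + e * d a).
Proof.
move=> e_ge0 [_ xE] dE small; split=> [A AD|]; rewrite big_split /= -mulr_sumr.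
  have := ler_wpM2l e_ge0 (ler_norm (\sum_(a in A) d a)); have := small A AD; lra.
by rewrite dE mulr0 addr0.
Qed.

Lemma vertex_rigid x (d : E -> R) : is_vertex P x ->
  (forall A, tight x A -> \sum_(a in A) d a = 0) -> forall a, d a = 0.
Proof.
move=> [Px x_extreme] d0.
have [e e_gt0 small] : exists2 e : R, 0 < e & forall A, A \in D ->
    e * `|\sum_(a in A) d a| <= (rho A)%:R - \sum_(a in A) x a.
  apply: uniform_step => [A AD | A AD /eqP]; first by rewrite subr_ge0 (proj1 Px).
  by rewrite subr_eq0 eq_sym => xA; apply: d0; rewrite /tight AD xA.
have dE : \sum_a d a = 0 by rewrite -sum_setT d0 ?tight_setT.
have Py := perturb_base (ltW e_gt0) Px dE small.
have Pz : P (fun a => x a + e * - d a).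
  apply: perturb_base (ltW e_gt0) Px _ _ => [|A AD]; first by rewrite sumrN dE oppr0.
  by rewrite sumrN normrN small.
have half_gt0 : 0 < 2^-1 :> R by rewrite invr_gt0.
have half_lt1 : 2^-1 < 1 :> R by rewrite invf_lt1 ?ltr1n.
have yz : (fun a => x a + e * d a) = (fun a => x a + e * - d a).
  by apply: (x_extreme _ _ _ Py Pz half_gt0 half_lt1) => a; lra.
move=> a; have /= yza := congr1 (fun f => f a) yz.
have /eqP : e * d a = 0 by lra.
by rewrite mulf_eq0 gt_eqF //= => /eqP.
Qed.

Lemma tight_separates x e f : is_vertex P x -> e != f ->
  exists2 L, tight x L & (e \in L) != (f \in L).
Proof.
move=> Vx nef.
have [/existsP[L /andP[tL sepL]] | /existsPn same] :=
  boolP [exists L, tight x L && ((e \in L) != (f \in L))]; first by exists L.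
pose d a : R := (a == e)%:R - (a == f)%:R.
have d0 L : tight x L -> \sum_(a in L) d a = 0.
  move=> tL; rewrite sumrB !sum_indicator.
  by have := same L; rewrite tL negbK => /eqP->; rewrite subrr.
have := vertex_rigid Vx d0 e; rewrite /d eqxx (negbTE nef) subr0 => /eqP.
by rewrite oner_eq0.
Qed.

Lemma tight_removable x C : is_vertex P x -> tight x C -> C != set0 ->
  exists2 e, e \in C & tight x (C :\ e).
Proof.
(* K is a largest tight proper subset of C; if two elements e, f of C were
   missing from K, a tight L separating them would make K :|: L :&: C larger. *)
move=> Vx tC C0; have Px := proj1 Vx.
pose below K := tight x K && (K \proper C).
have [|K /andP[tK ltKC] K_max] := @arg_maxnP _ set0 below (fun K => #|K|).
  by rewrite /below tight_set0 proper0.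
have [sKC [e eC eK]] := properP ltKC.
have [CeK | neCeK] := eqVneq (C :\ e) K; first by exists e; rewrite ?CeK.
have sKCe : K \subset C :\ e.
  by apply/subsetP=> y yK; rewrite !inE (subsetP sKC) // andbT; apply: contraNneq eK => <-.
have /properP[_ [f /setD1P[nfe fC] fK]] : K \proper C :\ e by rewrite properEneq eq_sym neCeK.
have [L tL sepL] := tight_separates Vx (nfe : f != e).
have [_ tLC] := tight_setU_setI Px tL tC.
have [tK' _] := tight_setU_setI Px tK tLC.
have sK'C : K :|: L :&: C \subset C by rewrite subUset sKC subsetIr.
have [[g gK' gK] [h hC hK']] : (exists2 g, g \in K :|: L :&: C & g \notin K) /\
                               (exists2 h, h \in C & h \notin K :|: L :&: C).
  move: sepL; case fL : (f \in L); case eL : (e \in L) => // _.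
    by split; [exists f | exists e]; rewrite // !inE ?fL ?eL ?fC ?orbT ?(negbTE eK).
  by split; [exists e | exists f]; rewrite // !inE ?fL ?eL ?eC ?orbT ?(negbTE fK).
have ltKK' : K \proper K :|: L :&: C by apply/properP; split; [apply: subsetUl | exists g].
have ltK'C : K :|: L :&: C \proper C by apply/properP; split=> //; exists h.
have := K_max (K :|: L :&: C); rewrite /below tK' ltK'C => /(_ isT) /=.
by rewrite leqNgt proper_card.
Qed.

Section Forward.
Hypothesis rho_local : local_chain_property D rho.

(* Unqualified, [support] would denote ssralg's [0.-support]. *)
Lemma support_tight x C : is_vertex P x -> tight x C ->
  Defs.support x :&: C \in D /\ rho (Defs.support x :&: C) = rho C.
Proof.
move=> Vx; have [n] := ubnP #|C|; elim: n C => // n IH C ltCn tC.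
have [-> | C0] := eqVneq C set0; first by rewrite setI0 (lattice_set0 D_lattice).
have [e eC tG] := tight_removable Vx tC C0.
have ltGn : (#|C :\ e| < n)%N by move: ltCn; rewrite (cardsD1 e C) eC.
have [SD rS] := IH _ ltGn tG.
move: tC; rewrite -(setD1K eC); set G := C :\ e.
have eG : e \notin G by rewrite !inE eqxx.
move: tG => /andP[GD /eqP xG] /andP[CD /eqP xC]; rewrite big_setU1 //= xG in xC.
have [rC | eG_raise] := rank_setU1 rho_mono rho_unit GD CD.
  have xe0 : x e = 0 by move: xC; rewrite rC; lra.
  suff -> : Defs.support x :&: (e |: G) = Defs.support x :&: G by rewrite rC.
  apply/setP=> a; rewrite /Defs.support !inE.
  by case: (eqVneq a e) => [->|]; rewrite ?xe0 ?eqxx.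
have xe1 : x e = 1 by move: xC; case: eG_raise => _ ->; rewrite -addn1 natrD; lra.
have -> : Defs.support x :&: (e |: G) = e |: (Defs.support x :&: G).
  apply/setP=> a; rewrite /Defs.support !inE.
  by case: (eqVneq a e) => [->|]; rewrite ?xe1 ?oner_eq0.
have [] := raises_rank_sub D_lattice rho_mono rho_local SD GD (subsetIr _ _) rS eG_raise.
by case: eG_raise => _ ->; rewrite rS => -> ->.
Qed.

Lemma vertex_support_in x : is_vertex P x -> Defs.support x \in D.
Proof. by move=> Vx; have [] := support_tight Vx (tight_setT (proj1 Vx)); rewrite setIT. Qed.
End Forward.

Section Greedy.
Variable s : seq E.
Hypothesis s_chain : lattice_chain D s setT.

Let s_set : [set:: s] = setT. Proof. by case: s_chain. Qed.
Let s_prefix u v : s = u ++ v -> [set:: u] \in D. Proof. by case: s_chain => _ _; apply. Qed.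
Let s_split_notin u e v : s = u ++ e :: v -> e \notin u.
Proof. by case: s_chain => + _ _ => /[swap] ->; rewrite cat_uniq /= => /and3P[_ /norP[]]. Qed.

Definition greedy e : R :=
  (rho [set:: take (index e s).+1 s])%:R - (rho [set:: take (index e s) s])%:R.

Lemma greedy_cat u e v : s = u ++ e :: v ->
  greedy e = (rho (e |: [set:: u]))%:R - (rho [set:: u])%:R.
Proof.
move=> suev; have eu := s_split_notin suev.
rewrite /greedy suev index_cat (negbTE eu) /= eqxx addn0 (take_size_cat _ (erefl (size u))).
by rewrite -cat_rcons (take_size_cat _ (size_rcons u e)) set_rcons.
Qed.

Lemma greedy_prefix_sum u v : s = u ++ v ->
  \sum_(a in [set:: u]) greedy a = (rho [set:: u])%:R.
Proof.
elim/last_ind: u v => [|u e IH] v; first by rewrite set_nil big_set0 rho0.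
rewrite cat_rcons => suev; have eu : e \notin [set:: u] by rewrite inE (s_split_notin suev).
by rewrite set_rcons big_setU1 //= (IH _ suev) (greedy_cat suev) subrK.
Qed.

Lemma greedy_feasible S u v : S \in D -> s = u ++ v ->
  \sum_(a in S :&: [set:: u]) greedy a <= (rho (S :&: [set:: u]))%:R.
Proof.
move=> SD; elim/last_ind: u v => [|u e IH] v; first by rewrite set_nil setI0 big_set0 rho0.
rewrite cat_rcons set_rcons => suev; have eu := s_split_notin suev.
have {}IH := IH _ suev; set U := [set:: u] in IH *.
have eU : e \notin U by rewrite inE.
have [eS | eNS] := boolP (e \in S); last first.
  suff -> : S :&: (e |: U) = S :&: U by [].
  by apply/setP=> a; rewrite !inE; case: (eqVneq a e) => [->|]; rewrite ?(negbTE eNS).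
have SeU : S :&: (e |: U) = e |: (S :&: U).
  by apply/setP=> a; rewrite !inE; case: (eqVneq a e) => [->|]; rewrite ?eS.
have UD : U \in D := s_prefix suev.
have SeUD : e |: (S :&: U) \in D.
  by rewrite -SeU lattice_setI // -set_rcons (s_prefix (v := v)) ?cat_rcons.
have := rho_submod SeUD UD.
have -> : (e |: (S :&: U)) :|: U = e |: U.
  by apply/setP=> a; rewrite !inE; case: (a == e); case: (a \in S); case: (a \in u).
have -> : (e |: (S :&: U)) :&: U = S :&: U.
  apply/setP=> a; rewrite !inE; case: (eqVneq a e) => [->|_].
    by rewrite (negbTE eu) !andbF.
  by rewrite /= -andbA andbb.
have eSU : e \notin S :&: U by rewrite inE (negbTE eU) andbF.
by rewrite SeU big_setU1 //= (greedy_cat suev); lra.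
Qed.

Lemma greedy_base : P greedy.
Proof.
split=> [S SD | ]; first by have := greedy_feasible SD (esym (cats0 s)); rewrite s_set setIT.
by rewrite -sum_setT -s_set (greedy_prefix_sum (esym (cats0 s))).
Qed.

Lemma greedy_vertex : is_vertex P greedy.
Proof.
split=> [|y z t Py Pz t_gt0 t_lt1 xyz]; first exact: greedy_base.
have tight_prefix u v : s = u ++ v -> tight y [set:: u] /\ tight z [set:: u].
  move=> suv; apply: tight_convex Py Pz _ xyz _; first by rewrite t_gt0 t_lt1.
  by rewrite /tight (s_prefix suv) (greedy_prefix_sum suv) eqxx.
apply/funext => e; have [u [v suev]] : exists u v, s = u ++ e :: v.
  by apply: mem_split; have := in_setT e; rewrite -s_set inE.
have eU : e \notin [set:: u] by rewrite inE (s_split_notin suev).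
have [/andP[_ /eqP yU] /andP[_ /eqP zU]] := tight_prefix _ _ suev.
have [] := tight_prefix (rcons u e) v; rewrite ?cat_rcons // set_rcons.
by rewrite /tight !big_setU1 //= yU zU => /andP[_ /eqP ye] /andP[_ /eqP ze]; lra.
Qed.
End Greedy.

Section Backward.
Hypothesis bases_in : forall B, @is_basis R E D rho B -> B \in D.

Lemma bases_raise_rank A bj bo : A \in D -> bj \notin A -> bo \notin bj |: A ->
  bj |: A \in D -> bo |: (bj |: A) \in D -> rho (bj |: A) = rho A ->
  (rho A < rho (bo |: (bj |: A)))%N -> raises_rank D rho A bo.
Proof.
move=> AD bjA boA bjAD A12D rj lt.
have [t1 cA] : exists t1, lattice_chain D t1 A.
  by have [t1 ?] := chain_extend D_lattice (chain_nil D_lattice) AD (sub0set A); exists t1.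
have [t3 cT] := chain_extend D_lattice (chain_rcons (chain_rcons cA bjA bjAD) boA A12D)
  (lattice_setT D_lattice) (subsetT _).
set s := _ ++ t3 in cT.
have t1A : [set:: t1] = A by case: cA.
have [_ r12] : raises_rank D rho (bj |: A) bo.
  by apply: (raises_rankP rho_mono rho_unit bjAD A12D); rewrite rj.
have s_bj : s = t1 ++ bj :: bo :: t3 by rewrite /s !cat_rcons.
have s_bo : s = rcons t1 bj ++ bo :: t3 by rewrite /s cat_rcons.
have xbj : greedy s bj = 0 by rewrite (greedy_cat cT s_bj) t1A rj subrr.
have xbo : greedy s bo = 1.
  by rewrite (greedy_cat cT s_bo) set_rcons t1A r12 -natr1 addrC addKr.
have BD : Defs.support (greedy s) \in D.
  by apply: bases_in; exists (greedy s); split=> //; apply: greedy_vertex.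
move: boA; rewrite in_setU1 negb_or => /andP[nbobj boA].
have boAE : bo |: A = A :|: (Defs.support (greedy s) :&: (bo |: (bj |: A))).
  apply/setP=> a; rewrite /Defs.support !inE.
  case: (eqVneq a bo) => [->|_]; first by rewrite xbo oner_eq0 orbT.
  case: (eqVneq a bj) => [->|_]; first by rewrite xbj eqxx (negbTE bjA).
  by case: (a \in A); rewrite ?andbF.
have boAD : bo |: A \in D by rewrite boAE lattice_setU // lattice_setI.
apply: (raises_rankP rho_mono rho_unit AD boAD).
have := rho_submod boAD bjAD; rewrite -!natrD ler_nat.
have -> : (bo |: A) :|: (bj |: A) = bo |: (bj |: A).
  by apply/setP=> a; rewrite !inE; case: (a == bo); case: (a == bj); case: (a \in A).
have -> : (bo |: A) :&: (bj |: A) = A.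
  apply/setP=> a; rewrite !inE; case: (eqVneq a bo) => [->|_].
    by rewrite (negbTE nbobj) (negbTE boA).
  by case: (a == bj); case: (a \in A).
by rewrite rj; lia.
Qed.

Lemma bases_local_chain_at A bj bo : A \in D -> bj |: A \in D -> bo |: (bj |: A) \in D ->
  (rho A < rho (bo |: (bj |: A)))%N -> raises_rank D rho A bj \/ raises_rank D rho A bo.
Proof.
move=> AD bjAD A12D lt.
have [rj | ] := rank_setU1 rho_mono rho_unit AD bjAD; last by left.
have [bjA | bjA] := boolP (bj \in A).
  have bjAE : bj |: A = A by apply/setUidPr; rewrite sub1set.
  by right; rewrite bjAE in A12D lt; apply: (raises_rankP rho_mono rho_unit AD A12D).
have [boA | boA] := boolP (bo \in bj |: A).
  have boAE : bo |: (bj |: A) = bj |: A by apply/setUidPr; rewrite sub1set.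
  by move: lt; rewrite boAE rj ltnn.
by right; apply: bases_raise_rank AD bjA boA bjAD A12D rj lt.
Qed.

Lemma local_chain_of_bases : local_chain_property D rho.
Proof.
move=> A b1 b2 AD A12D lt.
have [b12 | nb12] := eqVneq b1 b2.
  subst b2; have b1AE : b1 |: (b1 |: A) = b1 |: A by apply/setUidPr; rewrite sub1set setU11.
  by left; rewrite b1AE in A12D lt; apply: (raises_rankP rho_mono rho_unit AD A12D).
have ltA12 : A \proper b1 |: (b2 |: A).
  rewrite properEneq (subset_trans (subsetUr _ A) (subsetUr _ _)) andbT.
  by apply: contraTneq lt => <-; rewrite ltnn.
have [f /setDP[+ fA] fD] := lattice_removable D_lattice AD A12D ltA12.
rewrite !inE (negbTE fA) orbF => /orP[/eqP fb1 | /eqP fb2]; subst f.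
  rewrite setU1K ?inE ?negb_or ?nb12 // in fD.
  by have [] := bases_local_chain_at AD fD A12D lt; [right | left].
rewrite setUCA in A12D lt fD; rewrite setU1K ?inE ?negb_or 1?eq_sym ?nb12 // in fD.
exact: bases_local_chain_at.
Qed.
End Backward.
End BasePolyhedron.

Theorem theorem7p2 (R : realType) (E : finType) (D : {set {set E}})
    (rho : {set E} -> nat) :
  is_Umatroid D rho ->
  (is_poset_matroid D rho <-> forall B : {set E}, @is_basis R E D rho B -> B \in D).
Proof.
move=> rho_U; split.
  by case=> _ _ _ _ rho_local B [x [Vx ->]]; apply: vertex_support_in rho_U rho_local x Vx.
move=> bases_in; have [D_lattice rho0 rho_mono _ rho_unit] := rho_U.
by split=> //; apply: local_chain_of_bases rho_U bases_in.
Qed.
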